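(* For every integer $k\ge 2$, the user partition multicast rate of the $(k,2)$-GIC problem (defined in the context) satisfies $\beta_{UPM}\le k$.
   Context: GIC problem: there are $m$ packets $x_1,\dots,x_m$; for each $i\in[m]$ there is a nonempty set $U_i=\{u_i^1,\dots,u_i^{|U_i|}\}$ of users demanding $x_i$, $U=\bigcup_i U_i$; user $u_i^j$ knows the packets $x_{i'}$, $i'\in A_i^j$, where $A_i^j\subseteq[m]\setminus\{i\}$. UPM rate: for a partition of $U$ into nonempty disjoint sets $W_1,\dots,W_h$ ($1\le h\le m$), let $Y_e=\{i: u_i^j\in W_e\text{ for some } j\}$ and $c_e=\min\{|A_i^j\cap Y_e|: u_i^j\in W_e\}$; $\beta_{UPM}$ is the minimum over all such partitions of $\sum_{e=1}^h(|Y_e|-c_e)$. The $(k,2)$-GIC problem: $m=k(k-1)/2$ packets, each packet $x_i$ demanded by exactly two users $U_i=\{u_i^1,u_i^2\}$. For $l\in[k]$ define $I_l^1=\{(l-1)k+a-\tfrac{l(l-1)}{2} : a=1,\dots,k-l\}$ for $l\ne k$, $I_k^1=\emptyset$; $I_l^2=\{(a-1)k+l-\tfrac{a(a+1)}{2} : a=1,\dots,l-1\}$ for $l\ne1$, $I_1^2=\emptyset$; $I_l=I_l^1\cup I_l^2$. The side information of user $u_i^j$ ($j\in\{1,2\}$) is $A_i^j=I_l\setminus\{i\}$ where $l$ is the index with $i\in I_l^j$. *)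

From mathcomp Require Import all_boot.
Set Implicit Arguments. Unset Strict Implicit. Unset Printing Implicit Defensive.

(* General GIC problem: m packets (indexed by 'I_m, packet x_{i+1} is   *)
(* index i), a finite type of users, each user demanding one packet and *)
(* knowing a set of packets as side information.                        *)
Record GIC := {
  gic_m : nat;
  gic_user : finType;
  gic_dem : gic_user -> 'I_gic_m;
  gic_side : gic_user -> {set 'I_gic_m}
}.

Section UPM.
Variable G : GIC.
Local Notation m := (gic_m G).
Local Notation U := (gic_user G).
Local Notation dem := (@gic_dem G).
Local Notation side := (@gic_side G).

Definition Yset (W : {set U}) : {set 'I_m} := [set dem u | u in W].

(* c_e = min over users u in W_e of |A_u ∩ Y_e|.  The identity #|Y_e| of
   the fold is an upper bound of every term, so for nonempty W it is the
   exact minimum. *)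
Definition cval (W : {set U}) : nat :=
  \big[minn/#|Yset W|]_(u in W) #|side u :&: Yset W|.

Definition upm_value (P : {set {set U}}) : nat :=
  \sum_(W in P) (#|Yset W| - cval W).

Definition upm_partition (P : {set {set U}}) : bool :=
  partition P [set: U] && (0 < #|P| <= m).

(* The identity m of the
   fold is attained by the partition {U_i} (value m) in any GIC problem
   where each U_i is nonempty and i \notin A_i^j, so it does not affect
   the minimum. *)
Definition beta_UPM : nat :=
  \big[minn/m]_(P : {set {set U}} | upm_partition P) upm_value P.
End UPM.

(* ordinal i-1.  Users u_i^j are pairs (i, j) with j : 'I_2 (j=0 <-> 1, *)
(* j=1 <-> 2).                                                          *)
Definition mk2 (k : nat) : nat := k * (k - 1) %/ 2.

Definition I1 (k l : nat) : {set 'I_(mk2 k)} :=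
  [set i : 'I_(mk2 k) |
     has (fun a => i.+1 == (l - 1) * k + a - l * (l - 1) %/ 2) (iota 1 (k - l))].

Definition I2 (k l : nat) : {set 'I_(mk2 k)} :=
  [set i : 'I_(mk2 k) |
     has (fun a => i.+1 == (a - 1) * k + l - a * (a + 1) %/ 2) (iota 1 (l - 1))].

Definition Il (k l : nat) : {set 'I_(mk2 k)} := I1 k l :|: I2 k l.

Definition Ilj (k l : nat) (j : 'I_2) : {set 'I_(mk2 k)} :=
  if val j == 0 then I1 k l else I2 k l.

Definition side_k2 (k : nat) (u : 'I_(mk2 k) * 'I_2) : {set 'I_(mk2 k)} :=
  match [pick l : 'I_k | u.1 \in Ilj k l.+1 u.2] with
  | Some l => Il k l.+1 :\ u.1
  | None => set0
  end.

Definition GIC_k2 (k : nat) : GIC :=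
  {| gic_m := mk2 k;
     gic_user := ('I_(mk2 k) * 'I_2)%type;
     gic_dem := fun u => u.1;
     gic_side := side_k2 (k := k) |}.

From mathcomp Require Import all_boot zify.
Set Implicit Arguments. Unset Strict Implicit. Unset Printing Implicit Defensive.

(* Group the users by the index l with u_i^j demanding a packet of I_l^j.
   A user of group l knows I_l minus its own packet, and every packet
   demanded in group l lies in I_l, so each group is a block with
   c_e = |Y_e| - 1 and contributes 1 to the UPM sum.  There are at most k
   groups, and k <= m = k(k-1)/2 once k >= 3, so the grouping is an
   admissible partition.  For k = 2 (m = 1) the single block already
   has value at most m. *)

Lemma bigmin_le_cond (I : finType) (P : pred I) (F : I -> nat) x0 i :
  P i -> \big[minn/x0]_(j | P j) F j <= F i.
Proof.
move=> Pi; have : i \in index_enum I by rewrite mem_index_enum.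
elim: (index_enum I) => [//|a r IH]; rewrite inE big_cons => /orP [/eqP <-|ir].
  by rewrite Pi geq_minl.
case: ifP => _; last exact: IH.
exact: leq_trans (geq_minr _ _) (IH ir).
Qed.

Section UPMBounds.
Variable G : GIC.
Local Notation m := (gic_m G).
Local Notation U := (gic_user G).
Local Notation dem := (@gic_dem G).
Local Notation side := (@gic_side G).

Lemma beta_UPM_le_value (P : {set {set U}}) :
  upm_partition P -> beta_UPM G <= upm_value P.
Proof. exact: bigmin_le_cond. Qed.

Lemma beta_UPM_le_m (u0 : U) : beta_UPM G <= m.
Proof.
have P1 : upm_partition [set [set: U]].
  rewrite /upm_partition /partition cover1 eqxx trivIset1 cards1 inE /=.
  rewrite (leq_ltn_trans (leq0n _) (ltn_ord (dem u0))) andbT.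
  by apply/eqP => /setP /(_ u0); rewrite !inE.
apply: leq_trans (beta_UPM_le_value P1) _.
rewrite /upm_value big_set1; apply: leq_trans (leq_subr _ _) _.
by apply: leq_trans (max_card _) _; rewrite card_ord.
Qed.

Lemma cval_ge_clique (W : {set U}) :
  {in W &, forall u v, dem v != dem u -> dem v \in side u} ->
  #|Yset W| - 1 <= cval W.
Proof.
move=> clique; rewrite /cval.
apply: (big_ind (fun n => #|Yset W| - 1 <= n)) => [|a b ha hb|u uW].
- exact: leq_subr.
- by rewrite leq_min ha hb.
have uY : dem u \in Yset W by apply: imset_f.
rewrite (cardsD1 (dem u)) uY add1n subn1 /=.
apply/subset_leq_card/subsetP => y /setD1P [yu /imsetP [v vW yv]].
by rewrite yv in yu *; rewrite inE clique //; apply: imset_f.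
Qed.

Lemma beta_UPM_le_classes (T : finType) (f : U -> T) (u0 : U) :
  (forall u v, f u = f v -> dem v != dem u -> dem v \in side u) ->
  #|T| <= m -> beta_UPM G <= #|T|.
Proof.
move=> clique Tm.
pose P := preim_partition f [set: U].
have cardP : #|P| <= #|T|.
  rewrite /P /preim_partition /equivalence_partition.
  rewrite (imset_comp (fun t => [set y in [set: U] | t == f y]) f).
  exact: leq_trans (leq_imset_card _ _) (max_card _).
have P_ok : upm_partition P.
  rewrite /upm_partition preim_partitionP (leq_trans cardP Tm) andbT.
  by apply/card_gt0P; exists [set y in [set: U] | f u0 == f y]; apply: imset_f.
apply: leq_trans (beta_UPM_le_value P_ok) (leq_trans _ cardP).
rewrite /upm_value -sum1_card; apply: leq_sum => _ /imsetP [x _ ->].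
suff : #|Yset [set y in [set: U] | f x == f y]| - 1 <=
       cval [set y in [set: U] | f x == f y] by lia.
apply: cval_ge_clique => u v; rewrite !inE => /eqP fu /eqP fv.
by apply: clique; rewrite -fu -fv.
Qed.

End UPMBounds.

Lemma bracket_index (s : nat -> nat) n i :
  s 0 <= i < s n -> exists2 L, L < n & s L <= i < s L.+1.
Proof.
elim: n => [|n IH] /andP [s0i ltin]; first by rewrite ltnNge s0i in ltin.
have [lt_i_sn|le_sn_i] := ltnP i (s n); last by exists n; rewrite ?le_sn_i.
by case: IH => [|L ltLn HL]; [rewrite s0i | exists L => //; apply: ltnW].
Qed.

Section K2.
Variable k : nat.

(* Number of packets in I_1^1, ..., I_L^1; the (0-based) packets of
   I_{L+1}^1 are exactly those in [row_start L, row_start (L+1)). *)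
Definition row_start (L : nat) : nat := \sum_(t < L) (k - t.+1).

Lemma row_startS L : row_start L.+1 = row_start L + (k - L.+1).
Proof. by rewrite /row_start big_ord_recr. Qed.

Lemma row_start_bin L : L <= k -> row_start L + 'C(L.+1, 2) = L * k.
Proof.
elim: L => [|L IH] leLk; first by rewrite /row_start big_ord0.
rewrite row_startS binS bin1; have := IH (ltnW leLk); lia.
Qed.

Lemma mk2_row_start : mk2 k = row_start k.
Proof.
by rewrite /mk2 subn1 divn2 -bin2 -bin2_sum big_rev_mkord subn0.
Qed.

Lemma packet_row (i : 'I_(mk2 k)) :
  exists2 L, L < k & row_start L <= i < row_start L.+1.
Proof.
apply: (@bracket_index row_start).
by rewrite -mk2_row_start ltn_ord andbT /row_start big_ord0.
Qed.

Lemma mem_I1_row L (i : 'I_(mk2 k)) :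
  L < k -> row_start L <= i < row_start L.+1 -> i \in I1 k L.+1.
Proof.
move=> ltLk /andP [lo hi]; rewrite inE; apply/hasP.
exists (i.+1 - row_start L).
  by move: hi; rewrite mem_iota row_startS; lia.
have := row_start_bin (ltnW ltLk); rewrite bin2 divn2 subn1 /=; lia.
Qed.

Lemma mem_I2_row L (i : 'I_(mk2 k)) :
  L < k -> row_start L <= i -> i \in I2 k (L.+2 + (i - row_start L)).
Proof.
move=> ltLk lo; rewrite inE; apply/hasP; exists L.+1.
  by rewrite mem_iota; lia.
have -> : L.+1 * (L.+1 + 1) %/ 2 = 'C(L.+2, 2) by rewrite bin2 divn2 addn1 mulnC.
rewrite binS bin1 subn1 /=; have := row_start_bin (ltnW ltLk); lia.
Qed.

Lemma user_row_exists (u : 'I_(mk2 k) * 'I_2) :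
  exists l : 'I_k, u.1 \in Ilj k l.+1 u.2.
Proof.
case: u => i [[|[|//]] lt_j2] /=; have [L ltLk /andP [lo hi]] := packet_row i.
  by exists (Ordinal ltLk); apply: mem_I1_row; rewrite ?lo.
have ltlk : L.+1 + (i - row_start L) < k by move: hi; rewrite row_startS; lia.
by exists (Ordinal ltlk); apply: mem_I2_row.
Qed.

Definition user_row (u : 'I_(mk2 k) * 'I_2) : option 'I_k :=
  [pick l : 'I_k | u.1 \in Ilj k l.+1 u.2].

Lemma user_rowP u : exists2 l, user_row u = Some l & u.1 \in Il k l.+1.
Proof.
rewrite /user_row; case: pickP => [l ul|none].
  by exists l => //; move: ul; rewrite /Il /Ilj inE; case: ifP => _ ->; rewrite ?orbT.
by have [l] := user_row_exists u; rewrite none.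
Qed.

Lemma side_k2_row u l : user_row u = Some l -> side_k2 u = Il k l.+1 :\ u.1.
Proof. by rewrite /side_k2 /user_row => ->. Qed.

Lemma side_k2_same_row u v :
  user_row u = user_row v -> v.1 != u.1 -> v.1 \in side_k2 u.
Proof.
have [l vl vIl] := user_rowP v => uv vu.
by rewrite (side_k2_row (etrans uv vl)) in_setD1 vu.
Qed.

Lemma k_le_mk2 : 3 <= k -> k <= mk2 k.
Proof. by move=> k3; rewrite /mk2 leq_divRL // leq_mul2l; lia. Qed.

End K2.

Theorem proposition3 (k : nat) : 2 <= k -> beta_UPM (GIC_k2 k) <= k.
Proof.
move=> k2; have [|k3|->] := ltngtP k 2; first by rewrite ltnNge k2.
  have mk : k <= mk2 k := k_le_mk2 k3.
  pose u0 : gic_user (GIC_k2 k) := (Ordinal (leq_trans (ltnW (ltnW k3)) mk), ord0).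
  have [l0 _ _] := user_rowP u0.
  pose f : gic_user (GIC_k2 k) -> 'I_k := fun u => odflt l0 (user_row u).
  rewrite -[k in _ <= k]card_ord; apply: (beta_UPM_le_classes (f := f) u0).
    move=> u v fuv; apply: side_k2_same_row; move: fuv; rewrite /f.
    by have [lu -> _] := user_rowP u; have [lv -> _] := user_rowP v => /= ->.
  by rewrite card_ord.
by apply: leq_trans (beta_UPM_le_m (G := GIC_k2 2) (@Ordinal 1 0 isT, ord0)) _.
Qed.
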